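(* Let $X$ be a finite multiset of nonzero real numbers and let $T_{\min}$ be an addition tree over $X$ of minimum cost. Let $z$ be an internal node of $T_{\min}$ that is not the root, with children $z_1$ and $z_2$, sibling $u$, and parent $r$ (identifying each node with its value). (1) If $z>0$, $z_1\ge 0$ and $z_2>0$, then $u\ge 0$ or $r<0$. (2) If $z<0$, $z_1\le 0$ and $z_2<0$, then $u\le 0$ or $r>0$.
   Context: An addition tree over a multiset $X=\{x_1,\dots,x_n\}$ is a full binary tree with $n$ leaves labeled by the elements of $X$ (each element used exactly once), where every internal node has as its value the sum of the values of its two children. If $I_1,\dots,I_{n-1}$ are the values of the internal nodes of $T$, the cost of $T$ is $C(T)=\sum_{i=1}^{n-1}|I_i|$. $T_{\min}$ denotes an addition tree over $X$ minimizing $C$. *)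

From mathcomp Require Import all_boot all_order all_algebra.
Set Implicit Arguments. Unset Strict Implicit. Unset Printing Implicit Defensive.
Import Order.TTheory GRing.Theory Num.Theory.
Local Open Scope ring_scope.

Inductive atree (R : Type) : Type :=
| Leaf of R
| Node of atree R & atree R.
Arguments Leaf {R}.
Arguments Node {R}.

Section AdditionTrees.
Variable R : realFieldType.

Fixpoint value (t : atree R) : R :=
  match t with
  | Leaf x => x
  | Node l r => value l + value r
  end.

Fixpoint leaves (t : atree R) : seq R :=
  match t with
  | Leaf x => [:: x]
  | Node l r => leaves l ++ leaves r
  end.

Fixpoint cost (t : atree R) : R :=
  match t with
  | Leaf _ => 0
  | Node l r => `|value l + value r| + cost l + cost r
  end.

Definition addition_tree_over (X : seq R) (t : atree R) : Prop :=
  perm_eq (leaves t) X.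

Definition is_Tmin (X : seq R) (t : atree R) : Prop :=
  addition_tree_over X t /\
  forall t', addition_tree_over X t' -> cost t <= cost t'.

Fixpoint subtree (s t : atree R) : Prop :=
  s = t \/ match t with
           | Leaf _ => False
           | Node l r => subtree s l \/ subtree s r
           end.

(* In t there is a (non-root) internal node z whose two children are the
   subtrees z1 and z2 (in either order) and whose sibling is the subtree u
   (on either side); its parent is then the node Node z u or Node u z. *)
Definition node_config (t z1 z2 u : atree R) : Prop :=
  exists z, (z = Node z1 z2 \/ z = Node z2 z1) /\
            (subtree (Node z u) t \/ subtree (Node u z) t).

End AdditionTrees.

From mathcomp Require Import all_boot all_order all_algebra.
From mathcomp Require Import ring lra.
Set Implicit Arguments. Unset Strict Implicit. Unset Printing Implicit Defensive.
Import Order.TTheory GRing.Theory Num.Theory.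
Local Open Scope ring_scope.

(* Regrafting, in place of a subtree, any tree with the same leaves (hence the
   same value) changes the cost only inside it, so every subtree of a
   minimum-cost tree has minimum cost.  The rotation of [(z1 + z2) + u] into
   [z1 + (z2 + u)] only trades the internal node [z1 + z2] for [z2 + u], so
   [|z1 + z2| <= |z2 + u|].  Under the sign hypotheses of (1), [u < 0 <= r]
   would force [|z2 + u| < |z1 + z2|]; (2) is (1) with all signs flipped. *)

Section Surgery.
Variable R : realFieldType.
Implicit Types s t : atree R.

Lemma subtree_replace s s' t :
  subtree s t -> value s' = value s -> perm_eq (leaves s') (leaves s) ->
  exists t', [/\ perm_eq (leaves t') (leaves t), value t' = value t
               & cost t' = cost t - cost s + cost s'].
Proof.
move=> + val_s' perm_s'; elim: t => [x | l IHl r IHr] [s_t | sub].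
- by exists s'; rewrite -s_t subrr add0r.
- by [].
- by exists s'; rewrite -s_t subrr add0r.
case: sub => [/IHl | /IHr] [t' [perm_t' val_t' cost_t']].
- exists (Node t' r) => /=; rewrite perm_cat2r val_t' cost_t'.
  by split => //; ring.
- exists (Node l t') => /=; rewrite perm_cat2l val_t' cost_t'.
  by split => //; ring.
Qed.

Lemma Tmin_subtree_cost_min X t s s' :
  is_Tmin X t -> subtree s t ->
  value s' = value s -> perm_eq (leaves s') (leaves s) -> cost s <= cost s'.
Proof.
move=> [tX t_min] sub_s val_s' perm_s'.
have [t' [perm_t' _ cost_t']] := subtree_replace sub_s val_s' perm_s'.
have := t_min t' (perm_trans perm_t' tX).
rewrite cost_t'; lra.
Qed.

Lemma Tmin_rotate X t z1 z2 u :
  is_Tmin X t -> node_config t z1 z2 u ->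
  `|value z1 + value z2| <= `|value z2 + value u|.
Proof.
move=> t_opt [z [z_def sub_zu]].
pose s0 := Node (Node z1 z2) u.
have [s sub_s [val_s perm_s cost_s]] : exists2 s, subtree s t &
    [/\ value s = value s0, perm_eq (leaves s) (leaves s0) & cost s = cost s0].
  case: sub_zu => sub; [exists (Node z u) | exists (Node u z)] => //;
  case: z_def => -> /=; rewrite ?[value u + _]addrC ?[value z2 + value z1]addrC;
  by split; [ring | apply/permP => p; rewrite !count_cat; ring | ring].
pose s' := Node z1 (Node z2 u).
have val_s' : value s' = value s by rewrite val_s /=; ring.
have perm_s' : perm_eq (leaves s') (leaves s).
  by rewrite (permPr perm_s); apply/permP => p; rewrite !count_cat; ring.
have := Tmin_subtree_cost_min t_opt sub_s val_s' perm_s'.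
by rewrite cost_s /= (addrA (value z1)); lra.
Qed.

End Surgery.

Lemma norm_rotate_lt (R : realDomainType) (a b c : R) :
  0 <= a -> 0 < b -> c < 0 -> 0 <= a + b + c -> `|b + c| < `|a + b|.
Proof.
move=> a_ge0 b_gt0 c_lt0 abc_ge0.
rewrite ltr_norml (gtr0_norm (ltr_wpDl _ _)) //; lra.
Qed.

Theorem lemma2p1 (R : realFieldType) (X : seq R) (Tmin : atree R) :
  (forall x, x \in X -> x != 0) ->
  is_Tmin X Tmin ->
  forall z1 z2 u : atree R,
    node_config Tmin z1 z2 u ->
    let z := value z1 + value z2 in
    let r := z + value u in
    ((0 < z /\ 0 <= value z1 /\ 0 < value z2) -> (0 <= value u \/ r < 0)) /\
    ((z < 0 /\ value z1 <= 0 /\ value z2 < 0) -> (value u <= 0 \/ 0 < r)).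
Proof.
(* The leaves need not be nonzero. *)
move=> _ Tmin_opt z1 z2 u cfg z r.
have rot := Tmin_rotate Tmin_opt cfg.
split=> [[_ [z1_ge0 z2_gt0]] | [_ [z1_le0 z2_lt0]]].
- have [|u_lt0] := lerP 0 (value u); [by left | right].
  rewrite ltNge; apply/negP => r_ge0.
  by have := norm_rotate_lt z1_ge0 z2_gt0 u_lt0 r_ge0; rewrite ltNge rot.
- have [|u_gt0] := lerP (value u) 0; [by left | right].
  rewrite ltNge; apply/negP => r_le0.
  have := @norm_rotate_lt _ (- value z1) (- value z2) (- value u).
  rewrite -!opprD !normrN oppr_ge0 oppr_gt0 oppr_lt0 oppr_ge0.
  by move/(_ z1_le0 z2_lt0 u_gt0 r_le0); rewrite ltNge rot.
Qed.
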